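(* Let $N\ge 2$ and $m\ge N$ be integers, let $c_1,\dots,c_m$ be contents with request probabilities $\rho_1,\dots,\rho_m\ge 0$, $\sum_{\ell=1}^m\rho_\ell=1$, and set $\mathcal{P}_{\textup{hit}}=\sum_{\kappa=1}^{N}\rho_\kappa$. Consider users $u_1,\dots,u_N$, where $u_\kappa$ caches exactly the content $c_\kappa$, and where each user $u_\mu$ independently requests a single content $R_\mu$ with $\Pr(R_\mu=c_\ell)=\rho_\ell$. Let $K$ be uniform on $\{1,\dots,N\}$, independent of the requests, and consider the operating mode of the user $u_K$ (modes defined in the context). Then \begin{align*} \mathcal{P}_{\textup{SR}}&= \tfrac{1}{N} \textstyle\sum_{\kappa=1}^{N} \rho_\kappa \left(1-\rho_\kappa\right)^{N-1},\\ \mathcal{P}_{\textup{SR-HDTX}} &= \tfrac{1}{N} \textstyle\sum_{\kappa=1}^{N}\rho_\kappa \left(1-\left(1-\rho_\kappa \right)^{N-1}\right),\\ \mathcal{P}_{\textup{FDTR}} &= \tfrac{1}{N} \textstyle\sum_{\kappa=1}^{N}\left(\mathcal{P}_{\textup{hit}}-\rho_\kappa \right)\left(1-\left(1-\rho_\kappa \right)^{N-1}\right),\\ \mathcal{P}_{\textup{BFD}} &= \tfrac{1}{N} \textstyle\sum_{\kappa=1}^{N}\left(\mathcal{P}_{\textup{hit}}-\rho_\kappa \right)\rho_\kappa,\\ \mathcal{P}_{\textup{TNFD}} &= \tfrac{1}{N} \textstyle\sum_{\kappa=1}^{N}\left(\mathcal{P}_{\textup{hit}}-\rho_\kappa \right)\left(1-\rho_\kappa-\left(1-\rho_\kappa\right)^{N-1}\right),\\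 \mathcal{P}_{\textup{HDRX}} &= \tfrac{1}{N} \textstyle\sum_{\kappa=1}^{N}\left(\mathcal{P}_{\textup{hit}}-\rho_\kappa \right)\left(1-\rho_\kappa\right)^{N-1},\\ \mathcal{P}_{\textup{HDTX}} &= \tfrac{1}{N} \textstyle\sum_{\kappa=1}^{N}\left(1-\mathcal{P}_{\textup{hit}}\right)\left(1-\left(1-\rho_\kappa \right)^{N-1}\right),\\ \mathcal{P}_{\textup{HO}} &= \tfrac{1}{N} \textstyle\sum_{\kappa=1}^{N}\left(1-\mathcal{P}_{\textup{hit}}\right)\left(1-\rho_\kappa \right)^{N-1}. \end{align*}
   Context: For a user $u_\kappa$, let $S_\kappa$ be the event that there exists $\mu\ne\kappa$, $\mu\in\{1,\dots,N\}$, with $R_\mu=c_\kappa$ (some other user requests the content cached by $u_\kappa$). The operating modes of $u_\kappa$ are: SR (self-request): $R_\kappa=c_\kappa$ and not $S_\kappa$; SR-HDTX: $R_\kappa=c_\kappa$ and $S_\kappa$; FDTR (full-duplex transceiver): $R_\kappa=c_\mu$ for some $\mu\in\{1,\dots,N\}\setminus\{\kappa\}$, and $S_\kappa$; BFD (bi-directional full-duplex): $R_\kappa=c_\mu$ for some $\mu\in\{1,\dots,N\}\setminus\{\kappa\}$ and this $u_\mu$ has $R_\mu=c_\kappa$; TNFD (three-node full-duplex): FDTR holds but BFD does not; HDRX (half-duplex receiver): $R_\kappa=c_\mu$ for some $\mu\in\{1,\dots,N\}\setminus\{\kappa\}$ and not $S_\kappa$; HDTX (half-duplex transmitter): $R_\kappa\notin\{c_1,\dots,c_N\}$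 and $S_\kappa$; HO (hitting outage): $R_\kappa\notin\{c_1,\dots,c_N\}$ and not $S_\kappa$. For a mode $\Delta$, $\mathcal{P}_\Delta$ denotes the probability that $u_K$ is in mode $\Delta$. *)

From mathcomp Require Import all_boot all_order all_algebra.
Set Implicit Arguments. Unset Strict Implicit. Unset Printing Implicit Defensive.
Import Order.TTheory GRing.Theory Num.Theory.
Local Open Scope ring_scope.

(* Contents c_1..c_m are indexed 0..m-1; users u_1..u_N are indexed 0..N-1,
   user kappa caches content kappa.  A request profile is r : {ffun 'I_N -> 'I_m},
   r mu = l meaning R_mu = c_l. *)

Inductive mode := SR | SR_HDTX | FDTR | BFD | TNFD | HDRX | HDTX | HO.

Section Modes.
Variables N m : nat.
Implicit Types (k : 'I_N) (r : {ffun 'I_N -> 'I_m}).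

Definition req_is r (mu k : 'I_N) : bool := (val (r mu) == val k).

Definition S_ev r k : bool := [exists mu : 'I_N, (mu != k) && req_is r mu k].

Definition req_other r k : bool := [exists mu : 'I_N, (mu != k) && req_is r k mu].

Definition bfd r k : bool :=
  [exists mu : 'I_N, [&& mu != k, req_is r k mu & req_is r mu k]].

Definition req_miss r k : bool := [forall mu : 'I_N, ~~ req_is r k mu].

Definition in_mode (d : mode) r k : bool :=
  match d with
  | SR => req_is r k k && ~~ S_ev r k
  | SR_HDTX => req_is r k k && S_ev r k
  | FDTR => req_other r k && S_ev r k
  | BFD => bfd r k
  | TNFD => (req_other r k && S_ev r k) && ~~ bfd r k
  | HDRX => req_other r k && ~~ S_ev r k
  | HDTX => req_miss r k && S_ev r k
  | HO => req_miss r k && ~~ S_ev r k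
  end.

(* Probability that u_K is in mode d, with K uniform on users and the requests
   independent with Pr(R_mu = c_l) = rho l. *)
Definition mode_prob (R : numFieldType) (rho : nat -> R) (d : mode) : R :=
  \sum_(k : 'I_N) (N%:R)^-1 *
    \sum_(r : {ffun 'I_N -> 'I_m} | in_mode d r k) \prod_(mu : 'I_N) rho (val (r mu)).

Definition P_hit (R : numFieldType) (rho : nat -> R) : R := \sum_(k < N) rho k.

End Modes.

From mathcomp Require Import all_boot all_order all_algebra.
Import Order.TTheory GRing.Theory Num.Theory.
Local Open Scope ring_scope.

(* Under independent requests, the probability of an event that constrains
   each request separately is the product of the per-user marginal masses.
   Every mode of u_k is such an event, or the difference of two:
   S_k fails iff every other user avoids c_k, which has probability
   (1 - rho_k)^(N-1); the request of u_k alone decides between the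
   self-request, cached-by-another and miss cases; BFD splits over the unique
   partner u_mu, with probability rho_mu rho_k each; and TNFD = FDTR - BFD. *)

Lemma sum_ffun_forall {R : comPzSemiRingType} {I J : finType}
    (w : J -> R) (g : I -> pred J) :
  \sum_(f : {ffun I -> J} | [forall i, g i (f i)]) \prod_i w (f i)
  = \prod_i \sum_(j | g i j) w j.
Proof.
by rewrite bigA_distr_big_dep; apply: eq_bigl => f; apply/forallP/familyP.
Qed.

Lemma prodr_if_eq {R : comPzSemiRingType} {I : finType} (k : I) (x y : R) :
  \prod_(i : I) (if i == k then x else y) = x * y ^+ #|I|.-1.
Proof.
rewrite (bigD1 k) //= eqxx (eq_bigr (fun=> y)) => [|i /negbTE -> //].
by rewrite prodr_const cardC1.
Qed.

Lemma sum_exists_unique {R : nmodType} {I J : finType}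
    (P : I -> J -> bool) (F : I -> R) :
  (forall x y1 y2, P x y1 -> P x y2 -> y1 = y2) ->
  \sum_(x | [exists y, P x y]) F x = \sum_y \sum_(x | P x y) F x.
Proof.
move=> P_uniq; under [RHS]eq_bigr do rewrite big_mkcond.
rewrite exchange_big big_mkcond /=; apply: eq_bigr => x _.
case: existsP => [[y0 Py0] | noP].
  rewrite (bigD1 y0) //= Py0 big1 ?addr0 // => y y_y0.
  by case: ifP => // Py; rewrite (P_uniq _ _ _ Py Py0) eqxx in y_y0.
by rewrite big1 // => y _; case: ifP => // Py; case: noP; exists y.
Qed.

Section RequestProfiles.
Variables (R : realFieldType) (N m : nat) (rho : nat -> R).
Hypotheses (N_le_m : (N <= m)%N) (rho_sum1 : \sum_(l < m) rho l = 1).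

Local Notation profile := {ffun 'I_N -> 'I_m}.
Local Notation weight r := (\prod_(mu : 'I_N) rho (val (r mu))).

Definition mass (a : pred 'I_m) : R := \sum_(j | a j) rho (val j).

Definition mode_mass (d : mode) (k : 'I_N) : R :=
  \sum_(r : profile | in_mode d r k) weight r.

Lemma mode_probE d (Y : 'I_N -> R) :
  (forall k, mode_mass d k = Y k) ->
  mode_prob N m rho d = N%:R^-1 * \sum_(k < N) Y k.
Proof.
by move=> dY; rewrite /mode_prob big_distrr; apply: eq_bigr => k _; rewrite -dY.
Qed.

Lemma mass_predT : mass predT = 1.
Proof. exact: rho_sum1. Qed.

Lemma mass_eq (k : 'I_N) : mass (fun j => val j == val k) = rho k.
Proof. by rewrite /mass (big_pred1 (widen_ord N_le_m k)). Qed.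

Lemma mass_neq (k : 'I_N) : mass (fun j => val j != val k) = 1 - rho k.
Proof.
rewrite -mass_predT /mass [X in _ = X - _](bigD1 (widen_ord N_le_m k)) //=.
by rewrite addrC addrK; apply: eq_bigl => j; rewrite -val_eqE.
Qed.

Lemma mass_lt_N : mass (fun j => (val j < N)%N) = P_hit N rho.
Proof. by rewrite /P_hit (big_ord_widen m rho N_le_m). Qed.

Lemma mass_ge_N : mass (fun j => (N <= val j)%N) = 1 - P_hit N rho.
Proof.
rewrite -mass_lt_N -mass_predT /mass.
rewrite [X in _ = X - _](bigID (fun j => (val j < N)%N)) /= addrC addrK.
by apply: eq_bigl => j; rewrite leqNgt.
Qed.

Lemma mass_lt_N_neq (k : 'I_N) :
  mass (fun j => (val j < N)%N && (val j != val k)) = P_hit N rho - rho k.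
Proof.
rewrite -mass_lt_N /mass [X in _ = X - _](bigD1 (widen_ord N_le_m k)) //=.
by rewrite addrC addrK; apply: eq_bigl => j; rewrite -val_eqE.
Qed.

Lemma negb_S_ev (r : profile) k :
  ~~ S_ev r k = [forall (mu | mu != k), val (r mu) != val k].
Proof.
by rewrite negb_exists; apply: eq_forallb => mu; rewrite negb_and implybE.
Qed.

Lemma req_otherE (r : profile) k :
  req_other r k = (val (r k) < N)%N && (val (r k) != val k).
Proof.
apply/existsP/andP => [[mu /andP [mu_k /eqP ->]] | [r_lt r_k]].
  by rewrite ltn_ord val_eqE.
by exists (Ordinal r_lt); rewrite /req_is -val_eqE r_k /=.
Qed.

Lemma req_missE (r : profile) k : req_miss r k = (N <= val (r k))%N.
Proof.
apply/forallP/idP => [r_miss | r_ge mu].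
  rewrite leqNgt; apply/negP => r_lt.
  by move: (r_miss (Ordinal r_lt)); rewrite /req_is eqxx.
by apply/eqP => r_mu; move: r_ge; rewrite r_mu leqNgt ltn_ord.
Qed.

Lemma bfd_req_other (r : profile) k : bfd r k -> req_other r k && S_ev r k.
Proof.
by case/existsP => mu /and3P [mu_k r_k r_mu]; apply/andP; split;
  apply/existsP; exists mu; apply/andP.
Qed.

Lemma sum_req_avoiding (a b : pred 'I_m) k :
  \sum_(r : profile | a (r k) && [forall (mu | mu != k), b (r mu)]) weight r
  = mass a * mass b ^+ N.-1.
Proof.
rewrite -[N in N.-1]card_ord -(prodr_if_eq k).
under eq_bigr do rewrite -fun_if.
rewrite -(sum_ffun_forall _ (fun i => if i == k then a else b)).
apply: eq_bigl => r; apply/andP/forallP => [[r_a r_b] mu | r_ab].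
  by case: eqP => [-> // | /eqP mu_k]; exact: (implyP (forallP r_b mu)).
split; first by move: (r_ab k); rewrite eqxx.
apply/forallP => mu; apply/implyP => /negbTE mu_k.
by move: (r_ab mu); rewrite mu_k.
Qed.

Lemma sum_req (a : pred 'I_m) k :
  \sum_(r : profile | a (r k)) weight r = mass a.
Proof.
have := sum_req_avoiding a predT k; rewrite mass_predT expr1n mulr1 => <-.
apply: eq_bigl => r; case: (a (r k)) => //=.
by apply/esym/forallP => mu; rewrite implybT.
Qed.

Lemma sum_req_notS (a : pred 'I_m) k :
  \sum_(r : profile | a (r k) && ~~ S_ev r k) weight r
  = mass a * (1 - rho k) ^+ N.-1.
Proof.
rewrite -mass_neq -(sum_req_avoiding _ _ k).
by apply: eq_bigl => r; rewrite negb_S_ev.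
Qed.

Lemma sum_req_S (a : pred 'I_m) k :
  \sum_(r : profile | a (r k) && S_ev r k) weight r
  = mass a * (1 - (1 - rho k) ^+ N.-1).
Proof.
rewrite mulrBr mulr1 -(sum_req_notS a k) -(sum_req a k).
by rewrite [X in _ = X - _](bigID (fun r : profile => S_ev r k)) /= addrK.
Qed.

Lemma sum_partners k mu : mu != k ->
  \sum_(r : profile | req_is r k mu && req_is r mu k) weight r = rho mu * rho k.
Proof.
move=> mu_k.
pose g i := if i == k then fun j : 'I_m => val j == val mu
            else if i == mu then fun j => val j == val k else predT.
have -> : rho mu * rho k = \prod_i mass (g i).
  rewrite (bigD1 k) // (bigD1 mu mu_k) /g /= eqxx (negbTE mu_k) eqxx !mass_eq.
  rewrite big1 => [|i /andP [/negbTE -> /negbTE ->]]; last exact: mass_predT.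
  by rewrite mulr1 mulrC.
rewrite -sum_ffun_forall; apply: eq_bigl => r; rewrite /g.
apply/andP/forallP => [[r_k r_mu] i | r_g].
  by case: eqP => [-> // | _]; case: eqP => [-> // | _].
by split; [move: (r_g k) | move: (r_g mu)]; rewrite ?eqxx ?(negbTE mu_k) ?eqxx.
Qed.

Lemma mode_mass_SR k : mode_mass SR k = rho k * (1 - rho k) ^+ N.-1.
Proof. by rewrite -[X in X * _](mass_eq k) -sum_req_notS. Qed.

Lemma mode_mass_SR_HDTX k :
  mode_mass SR_HDTX k = rho k * (1 - (1 - rho k) ^+ N.-1).
Proof. by rewrite -[X in X * _](mass_eq k) -sum_req_S. Qed.

Lemma mode_mass_FDTR k :
  mode_mass FDTR k = (P_hit N rho - rho k) * (1 - (1 - rho k) ^+ N.-1).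
Proof.
rewrite -mass_lt_N_neq -sum_req_S.
by apply: eq_bigl => r; rewrite /= req_otherE.
Qed.

Lemma mode_mass_BFD k : mode_mass BFD k = (P_hit N rho - rho k) * rho k.
Proof.
rewrite /mode_mass /=.
rewrite (sum_exists_unique
  (fun r mu => [&& mu != k, req_is r k mu & req_is r mu k])); last first.
  move=> r mu1 mu2 /and3P [_ /eqP r_mu1 _] /and3P [_ /eqP r_mu2 _].
  by apply: val_inj; rewrite -r_mu1 r_mu2.
rewrite /P_hit [X in (X - _) * _](bigD1 k) //= addrC addrK big_distrl /=.
rewrite [RHS]big_mkcond.
apply: eq_bigr => mu _; have [-> | mu_k] := eqVneq mu k.
  by rewrite big_pred0 // => r; rewrite eqxx.
by rewrite -sum_partners.
Qed.

Lemma mode_mass_TNFD k :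
  mode_mass TNFD k = (P_hit N rho - rho k) * (1 - rho k - (1 - rho k) ^+ N.-1).
Proof.
have TNFD_split : mode_mass TNFD k = mode_mass FDTR k - mode_mass BFD k.
  rewrite /mode_mass [X in _ = X - _](bigID (fun r : profile => bfd r k)) /=.
  have FDTR_bfd (r : profile) : in_mode FDTR r k && bfd r k = bfd r k.
    by case: (boolP (bfd r k)) => [/bfd_req_other | _]; rewrite ?andbF ?andbT.
  by rewrite (eq_bigl _ _ FDTR_bfd) addrC addrK.
by rewrite TNFD_split mode_mass_FDTR mode_mass_BFD -mulrBr addrAC.
Qed.

Lemma mode_mass_HDRX k :
  mode_mass HDRX k = (P_hit N rho - rho k) * (1 - rho k) ^+ N.-1.
Proof.
rewrite -mass_lt_N_neq -sum_req_notS.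
by apply: eq_bigl => r; rewrite /= req_otherE.
Qed.

Lemma mode_mass_HDTX k :
  mode_mass HDTX k = (1 - P_hit N rho) * (1 - (1 - rho k) ^+ N.-1).
Proof.
by rewrite -mass_ge_N -sum_req_S; apply: eq_bigl => r; rewrite /= req_missE.
Qed.

Lemma mode_mass_HO k : mode_mass HO k = (1 - P_hit N rho) * (1 - rho k) ^+ N.-1.
Proof.
by rewrite -mass_ge_N -sum_req_notS; apply: eq_bigl => r; rewrite /= req_missE.
Qed.

End RequestProfiles.

Theorem theorem1 (R : realFieldType) (N m : nat) (rho : nat -> R) :
  (2 <= N)%N -> (N <= m)%N ->
  (forall l, (l < m)%N -> 0 <= rho l) ->
  \sum_(l < m) rho l = 1 ->
  let P := mode_prob N m rho in
  let Ph := P_hit N rho in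
  P SR = N%:R^-1 * \sum_(k < N) rho k * (1 - rho k) ^+ N.-1 /\
      P SR_HDTX = N%:R^-1 * \sum_(k < N) rho k * (1 - (1 - rho k) ^+ N.-1) /\
      P FDTR = N%:R^-1 * \sum_(k < N) (Ph - rho k) * (1 - (1 - rho k) ^+ N.-1) /\
      P BFD = N%:R^-1 * \sum_(k < N) (Ph - rho k) * rho k /\
      P TNFD = N%:R^-1 * \sum_(k < N) (Ph - rho k) * (1 - rho k - (1 - rho k) ^+ N.-1) /\
      P HDRX = N%:R^-1 * \sum_(k < N) (Ph - rho k) * (1 - rho k) ^+ N.-1 /\
      P HDTX = N%:R^-1 * \sum_(k < N) (1 - Ph) * (1 - (1 - rho k) ^+ N.-1) /\
    P HO = N%:R^-1 * \sum_(k < N) (1 - Ph) * (1 - rho k) ^+ N.-1.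
Proof.
move=> _ N_le_m _ rho_sum1 P Ph.
split; [|split; [|split; [|split; [|split; [|split; [|split]]]]]];
  apply: mode_probE => k.
- exact: mode_mass_SR.
- exact: mode_mass_SR_HDTX.
- exact: mode_mass_FDTR.
- exact: mode_mass_BFD.
- exact: mode_mass_TNFD.
- exact: mode_mass_HDRX.
- exact: mode_mass_HDTX.
- exact: mode_mass_HO.
Qed.
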